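(* Let $\mathbb{E}$ be a finitely complete category endowed with a point-congruous class $\Sigma$ of split epimorphisms, and suppose $\mathbb{E}$ is $\Sigma$-protomodular. Then for every object $Z$, the full subcategory $\Sigma l_Z(\mathbb{E})$ of the slice $\mathbb{E}/Z$ whose objects are the $\Sigma$-special morphisms with codomain $Z$ is a protomodular category. In particular the full subcategory of $\mathbb{E}$ of $\Sigma$-special objects (the case $Z=1$) is protomodular.
   Context: A split epimorphism is a pair $(f,s)$ with $fs=1$. A class $\Sigma$ of split epimorphisms is fibrational if it contains all split epimorphisms $(f,s)$ with $f$ invertible and is stable under pullback along any morphism; it is point-congruous if moreover the full subcategory $\Sigma(\mathbb{E})$ of the category $\mathrm{Pt}(\mathbb{E})$ of split epimorphisms (with commuting squares as morphisms) is closed under finite limits in $\mathrm{Pt}(\mathbb{E})$. A pair of morphisms with common codomain $W$ is jointly extremally epic if it factors jointly through no non-invertible monomorphism into $W$. A split epimorphism $(f,s)\colon X\rightleftarrows Y$ is strongly split when for every morphism $y\colon\bar Y\to Y$, with $x\colon\bar Y\times_YX\to X$ the pullback projection, the pair $(x,s)$ is jointly extremally epic; $\mathbb{E}$ is $\Sigma$-protomodular when every split epimorphism in $\Sigma$ is strongly split. A $\Sigma$-relation is a reflexive relation $(d_0,d_1)\colon S\rightarrowtail X\times X$ with reflexivity $s_0$ such that $(d_0,s_0)\in\Sigma$; a morphism $f$ is $\Sigma$-special when its kernel relation $R[f]$ is a $\Sigma$-relation, and an object is $\Sigma$-special when its morphism to the terminal object $1$ is. A category is protomodular when base-change functors along any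 morphism with respect to its fibration of points (pullback of split epimorphisms) are conservative, equivalently when every split epimorphism is strongly split. *)

From Stdlib Require Import ProofIrrelevance.

Set Implicit Arguments.
Unset Strict Implicit.

Record Category := {
  Obj :> Type;
  Hom : Obj -> Obj -> Type;
  idm : forall a, Hom a a;
  comp : forall a b c, Hom b c -> Hom a b -> Hom a c;
  comp_id_l : forall a b (f : Hom a b), comp (idm b) f = f;
  comp_id_r : forall a b (f : Hom a b), comp f (idm a) = f;
  comp_assoc : forall a b c d (h : Hom c d) (g : Hom b c) (f : Hom a b),
      comp h (comp g f) = comp (comp h g) f
}.
Arguments Hom {C} a b : rename.
Arguments idm {C} a : rename.
Arguments comp {C} {a b c} g f : rename.
Arguments comp_id_l {C} {a b} f : rename.
Arguments comp_id_r {C} {a b} f : rename.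
Arguments comp_assoc {C} {a b c d} h g f : rename.

Notation "g ∘ f" := (comp g f) (at level 40, left associativity).

Section Basics.
Context {C : Category}.

Definition is_iso {a b : C} (f : Hom a b) : Prop :=
  exists g : Hom b a, g ∘ f = idm a /\ f ∘ g = idm b.

Definition is_mono {m w : C} (f : Hom m w) : Prop :=
  forall (t : C) (u v : Hom t m), f ∘ u = f ∘ v -> u = v.

Definition is_terminal (t : C) : Prop :=
  forall x : C, exists f : Hom x t, forall g : Hom x t, g = f.

Definition is_pullback {a b c p : C} (f : Hom a c) (g : Hom b c)
    (p1 : Hom p a) (p2 : Hom p b) : Prop :=
  f ∘ p1 = g ∘ p2 /\
  forall (q : C) (q1 : Hom q a) (q2 : Hom q b), f ∘ q1 = g ∘ q2 ->
    exists u : Hom q p, p1 ∘ u = q1 /\ p2 ∘ u = q2 /\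
      forall u' : Hom q p, p1 ∘ u' = q1 -> p2 ∘ u' = q2 -> u' = u.

Definition has_pullbacks : Prop :=
  forall (a b c : C) (f : Hom a c) (g : Hom b c),
    exists (p : C) (p1 : Hom p a) (p2 : Hom p b), is_pullback f g p1 p2.

Definition finitely_complete : Prop :=
  (exists t : C, is_terminal t) /\ has_pullbacks.

Definition jointly_extremally_epic {a b w : C} (u : Hom a w) (v : Hom b w) : Prop :=
  forall (m : C) (i : Hom m w) (u' : Hom a m) (v' : Hom b m),
    is_mono i -> i ∘ u' = u -> i ∘ v' = v -> is_iso i.

Definition strongly_split {x y : C} (f : Hom x y) (s : Hom y x) : Prop :=
  forall (yb : C) (yy : Hom yb y) (p : C) (xx : Hom p x) (fb : Hom p yb),
    is_pullback f yy xx fb -> jointly_extremally_epic xx s.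

(* protomodularity: pullbacks of split epis along any map exist (so that the
   fibration of points is defined), and every split epimorphism is strongly split *)
Definition protomodular : Prop :=
  (forall (x y : C) (f : Hom x y) (s : Hom y x) (yb : C) (yy : Hom yb y),
      f ∘ s = idm y -> exists (p : C) (xx : Hom p x) (fb : Hom p yb),
        is_pullback f yy xx fb) /\
  (forall (x y : C) (f : Hom x y) (s : Hom y x), f ∘ s = idm y -> strongly_split f s).

End Basics.
Arguments protomodular C : clear implicits.
Arguments finitely_complete C : clear implicits.

Definition FullSub (C : Category) (P : C -> Prop) : Category :=
  {| Obj := {x : C | P x};
     Hom := fun a b => Hom (proj1_sig a) (proj1_sig b);
     idm := fun a => idm (proj1_sig a);
     comp := fun a b c g f => g ∘ f;
     comp_id_l := fun a b f => comp_id_l f;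
     comp_id_r := fun a b f => comp_id_r f;
     comp_assoc := fun a b c d h g f => comp_assoc h g f |}.

Section Slice.
Variables (C : Category) (Z : C).
Definition SObj := {x : C & Hom x Z}.
Definition SHom (a b : SObj) := {h : Hom (projT1 a) (projT1 b) | projT2 b ∘ h = projT2 a}.
Definition Sid (a : SObj) : SHom a a.
Proof. exists (idm _). apply comp_id_r. Defined.
Definition Scomp (a b c : SObj) (g : SHom b c) (f : SHom a b) : SHom a c.
Proof.
  exists (proj1_sig g ∘ proj1_sig f).
  rewrite comp_assoc, (proj2_sig g). exact (proj2_sig f).
Defined.
Lemma SHom_eq (a b : SObj) (g h : SHom a b) : proj1_sig g = proj1_sig h -> g = h.
Proof.
  destruct g, h; simpl; intros ->; f_equal; apply proof_irrelevance.
Qed.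
Definition Slice : Category.
Proof.
  refine {| Obj := SObj; Hom := SHom; idm := Sid; comp := Scomp |};
  intros; apply SHom_eq; simpl.
  - apply comp_id_l. - apply comp_id_r. - apply comp_assoc.
Defined.
End Slice.

Section Points.
Variable (C : Category).
Record PtObj := {
  ptX : C; ptY : C; ptf : Hom ptX ptY; pts : Hom ptY ptX;
  ptfs : ptf ∘ pts = idm ptY }.
Record PtHom (a b : PtObj) := {
  ptu : Hom (ptX a) (ptX b); ptv : Hom (ptY a) (ptY b);
  pt_eqf : ptf b ∘ ptu = ptv ∘ ptf a;
  pt_eqs : ptu ∘ pts a = pts b ∘ ptv }.
Lemma PtHom_eq (a b : PtObj) (g h : PtHom a b) :
  ptu g = ptu h -> ptv g = ptv h -> g = h.
Proof.
  destruct g, h; simpl; intros -> ->; f_equal; apply proof_irrelevance.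
Qed.
Definition Ptid (a : PtObj) : PtHom a a.
Proof.
  refine {| ptu := idm _; ptv := idm _ |};
  rewrite comp_id_l, comp_id_r; reflexivity.
Defined.
Definition Ptcomp (a b c : PtObj) (g : PtHom b c) (f : PtHom a b) : PtHom a c.
Proof.
  refine {| ptu := ptu g ∘ ptu f; ptv := ptv g ∘ ptv f |}.
  - rewrite comp_assoc, (pt_eqf g), <- comp_assoc, (pt_eqf f), comp_assoc; reflexivity.
  - rewrite <- comp_assoc, (pt_eqs f), comp_assoc, (pt_eqs g), comp_assoc; reflexivity.
Defined.
Definition Pt : Category.
Proof.
  refine {| Obj := PtObj; Hom := PtHom; idm := Ptid; comp := Ptcomp |};
  intros; apply PtHom_eq; simpl; (apply comp_id_l || apply comp_id_r || apply comp_assoc).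
Defined.
End Points.

Definition SplitClass (C : Category) :=
  forall x y : C, Hom x y -> Hom y x -> Prop.

Section Sigma.
Variables (C : Category) (Sigma : SplitClass C).

Definition split_epi_class : Prop :=
  forall (x y : C) (f : Hom x y) (s : Hom y x), Sigma f s -> f ∘ s = idm y.

Definition fibrational : Prop :=
  (forall (x y : C) (f : Hom x y) (s : Hom y x),
      f ∘ s = idm y -> is_iso f -> Sigma f s) /\
  (forall (x y : C) (f : Hom x y) (s : Hom y x) (yb : C) (yy : Hom yb y)
          (p : C) (xx : Hom p x) (fb : Hom p yb) (sb : Hom yb p),
      Sigma f s -> is_pullback f yy xx fb ->
      fb ∘ sb = idm yb -> xx ∘ sb = s ∘ yy -> Sigma fb sb).

Definition inSigma (a : Pt C) : Prop := Sigma (ptf a) (pts a).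

(* Sigma(E) closed under finite limits in Pt(E): under the terminal object
   and under pullbacks (which generate all finite limits). *)
Definition point_congruous : Prop :=
  fibrational /\
  (forall t : Pt C, is_terminal t -> inSigma t) /\
  (forall (a b c p : Pt C) (f : Hom a c) (g : Hom b c) (p1 : Hom p a) (p2 : Hom p b),
      is_pullback f g p1 p2 -> inSigma a -> inSigma b -> inSigma c -> inSigma p).

Definition sigma_protomodular : Prop :=
  forall (x y : C) (f : Hom x y) (s : Hom y x), Sigma f s -> strongly_split f s.

(* (d0,d1) : S -> X x X with reflexivity s0 is a Sigma-relation when (d0,s0) in Sigma;
   f is Sigma-special when its kernel relation R[f] (kernel pair with diagonal) is. *)
Definition sigma_special {x z : C} (f : Hom x z) : Prop :=
  forall (r : C) (d0 d1 : Hom r x) (s0 : Hom x r),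
    is_pullback f f d0 d1 -> d0 ∘ s0 = idm x -> d1 ∘ s0 = idm x -> Sigma d0 s0.

Definition sigma_special_object (x : C) : Prop :=
  forall (t : C), is_terminal t -> forall f : Hom x t, sigma_special f.

Definition SigmaSpecialSlice (Z : C) : Category :=
  @FullSub (@Slice C Z) (fun a => sigma_special (projT2 a)).

Definition SigmaSpecialObjects : Category :=
  @FullSub C sigma_special_object.
End Sigma.

(* A category D presented by a faithful functor into E/Z that is full and essentially
   surjective onto the Sigma-special arrows behaves like Sigma l_Z(E); the slice is such a
   presentation, and so is the category of Sigma-special objects over a terminal object.  Sigma-special arrows over Z are stable under pullback,
   because kernel pairs commute with pullbacks, so the kernel-pair point of the pullback is
   a pullback in Pt(E) of Sigma-points; hence D has pullbacks, computed in E.  A split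
   epimorphism (f, s) between Sigma-special arrows h = k f and k lies in Sigma, because it is
   the pullback in Pt(E) of the change of base of the point R[h] along s, the diagonal point
   of R[k] and an identity point.  Sigma-protomodularity of E then makes every split
   epimorphism of D strongly split, as the presentation preserves pullbacks and
   monomorphisms and reflects isomorphisms. *)

From Stdlib Require Import IndefiniteDescription.

Set Implicit Arguments.
Unset Strict Implicit.

Section Pullbacks.
Context {C : Category}.

Lemma pullback_comm {a b c p : C} {f : Hom a c} {g : Hom b c} {p1 : Hom p a} {p2 : Hom p b} :
  is_pullback f g p1 p2 -> f ∘ p1 = g ∘ p2.
Proof. intros [H _]; exact H. Qed.

Lemma pullback_factor {a b c p : C} {f : Hom a c} {g : Hom b c} {p1 : Hom p a} {p2 : Hom p b} :
  is_pullback f g p1 p2 -> forall (q : C) (q1 : Hom q a) (q2 : Hom q b), f ∘ q1 = g ∘ q2 ->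
  exists u : Hom q p, p1 ∘ u = q1 /\ p2 ∘ u = q2.
Proof.
  intros [_ H] q q1 q2 Hq. destruct (H q q1 q2 Hq) as [u [H1 [H2 _]]]. eauto.
Qed.

Lemma pullback_hom_ext {a b c p : C} {f : Hom a c} {g : Hom b c} {p1 : Hom p a} {p2 : Hom p b} :
  is_pullback f g p1 p2 -> forall (q : C) (u v : Hom q p),
  p1 ∘ u = p1 ∘ v -> p2 ∘ u = p2 ∘ v -> u = v.
Proof.
  intros [Hc H] q u v H1 H2.
  destruct (H q (p1 ∘ u) (p2 ∘ u)) as [w [_ [_ Hw]]].
  { rewrite !comp_assoc, Hc. reflexivity. }
  rewrite (Hw u eq_refl eq_refl). symmetry; apply Hw; auto.
Qed.

Lemma pullback_precomp_iso {a b c p p' : C} {f : Hom a c} {g : Hom b c}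
  {p1 : Hom p a} {p2 : Hom p b}
  (j : Hom p' p) (i : Hom p p') :
  is_pullback f g p1 p2 -> j ∘ i = idm p -> i ∘ j = idm p' ->
  is_pullback f g (p1 ∘ j) (p2 ∘ j).
Proof.
  intros H Hji Hij. split.
  - rewrite !comp_assoc, (pullback_comm H). reflexivity.
  - intros q q1 q2 Hq. destruct (pullback_factor H Hq) as [u [Hu1 Hu2]].
    assert (Hji_u : j ∘ (i ∘ u) = u) by (rewrite comp_assoc, Hji; apply comp_id_l).
    exists (i ∘ u). split; [|split].
    + rewrite <- comp_assoc, Hji_u. exact Hu1.
    + rewrite <- comp_assoc, Hji_u. exact Hu2.
    + intros u' H1 H2.
      assert (Hu' : j ∘ u' = u).
      { apply (pullback_hom_ext H); rewrite comp_assoc; [rewrite H1, Hu1 | rewrite H2, Hu2];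
          reflexivity. }
      rewrite <- Hu', comp_assoc, Hij, comp_id_l. reflexivity.
Qed.

Lemma pullback_unique_iso {a b c p p' : C} {f : Hom a c} {g : Hom b c}
  {p1 : Hom p a} {p2 : Hom p b} {p1' : Hom p' a} {p2' : Hom p' b} :
  is_pullback f g p1 p2 -> is_pullback f g p1' p2' ->
  exists (j : Hom p' p) (i : Hom p p'),
    j ∘ i = idm p /\ i ∘ j = idm p' /\ p1 ∘ j = p1' /\ p2 ∘ j = p2'.
Proof.
  intros H H'.
  destruct (pullback_factor H (pullback_comm H')) as [j [Hj1 Hj2]].
  destruct (pullback_factor H' (pullback_comm H)) as [i [Hi1 Hi2]].
  exists j, i. split; [|split]; auto.
  - apply (pullback_hom_ext H); rewrite comp_assoc, comp_id_r;
      [rewrite Hj1, Hi1 | rewrite Hj2, Hi2]; reflexivity.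
  - apply (pullback_hom_ext H'); rewrite comp_assoc, comp_id_r;
      [rewrite Hi1, Hj1 | rewrite Hi2, Hj2]; reflexivity.
Qed.

Lemma identity_square_pullback (y : C) : is_pullback (idm y) (idm y) (idm y) (idm y).
Proof.
  split; [reflexivity|].
  intros q q1 q2 Hq. rewrite !comp_id_l in Hq. subst q2.
  exists q1. rewrite !comp_id_l. split; [|split]; auto.
  intros u' H _. rewrite comp_id_l in H. exact H.
Qed.

Lemma terminal_hom_unique (t : C) : is_terminal t -> forall x (u v : Hom x t), u = v.
Proof. intros Ht x u v. destruct (Ht x) as [f Hf]. rewrite (Hf u), (Hf v). reflexivity. Qed.

Lemma pullback_over_terminal {a b t t' p : C} (f : Hom a t) (g : Hom b t)
  (f' : Hom a t') (g' : Hom b t') (p1 : Hom p a) (p2 : Hom p b) :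
  is_terminal t -> is_terminal t' -> is_pullback f' g' p1 p2 -> is_pullback f g p1 p2.
Proof.
  intros Ht Ht' [_ H]. split.
  - apply (terminal_hom_unique Ht).
  - intros q q1 q2 _. apply H. apply (terminal_hom_unique Ht').
Qed.

Record KernelPair {x z : C} (h : Hom x z) := {
  kp_obj : C;
  kp_d0 : Hom kp_obj x;
  kp_d1 : Hom kp_obj x;
  kp_diag : Hom x kp_obj;
  kp_pullback : is_pullback h h kp_d0 kp_d1;
  kp_d0_diag : kp_d0 ∘ kp_diag = idm x;
  kp_d1_diag : kp_d1 ∘ kp_diag = idm x }.

Lemma kernel_pair_exists : @has_pullbacks C -> forall {x z : C} (h : Hom x z),
  inhabited (KernelPair h).
Proof.
  intros HP x z h. destruct (HP _ _ _ h h) as [r [d0 [d1 Hr]]].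
  destruct (pullback_factor Hr (eq_refl (h ∘ idm x))) as [s0 [H0 H1]].
  exact (inhabits (Build_KernelPair Hr H0 H1)).
Qed.

Lemma kernel_pair_map_exists {x w z : C} {hX : Hom x z} {hW : Hom w z}
  (K : KernelPair hX) (L : KernelPair hW) (g : Hom x w) :
  hW ∘ g = hX ->
  exists u : Hom (kp_obj K) (kp_obj L),
    kp_d0 L ∘ u = g ∘ kp_d0 K /\ kp_d1 L ∘ u = g ∘ kp_d1 K.
Proof.
  intros Hg. apply (pullback_factor (kp_pullback L)).
  rewrite !comp_assoc, Hg. exact (pullback_comm (kp_pullback K)).
Qed.

Lemma kernel_pair_map_diag {x w z z' : C} {hX : Hom x z} {hW : Hom w z'}
  (K : KernelPair hX) (L : KernelPair hW) (g : Hom x w) (u : Hom (kp_obj K) (kp_obj L)) :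
  kp_d0 L ∘ u = g ∘ kp_d0 K -> kp_d1 L ∘ u = g ∘ kp_d1 K ->
  u ∘ kp_diag K = kp_diag L ∘ g.
Proof.
  intros H0 H1. apply (pullback_hom_ext (kp_pullback L)).
  - rewrite !comp_assoc, H0, kp_d0_diag, <- comp_assoc, kp_d0_diag, comp_id_l. apply comp_id_r.
  - rewrite !comp_assoc, H1, kp_d1_diag, <- comp_assoc, kp_d1_diag, comp_id_l. apply comp_id_r.
Qed.

Definition kernel_point {x z : C} {h : Hom x z} (K : KernelPair h) : Pt C :=
  {| ptf := kp_d0 K; pts := kp_diag K; ptfs := kp_d0_diag K |}.

Definition kernel_point_hom {x w z z' : C} {hX : Hom x z} {hW : Hom w z'}
  (K : KernelPair hX) (L : KernelPair hW) (g : Hom x w) (u : Hom (kp_obj K) (kp_obj L))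
  (H0 : kp_d0 L ∘ u = g ∘ kp_d0 K) (H1 : kp_d1 L ∘ u = g ∘ kp_d1 K) :
  Hom (kernel_point K) (kernel_point L) :=
  @Build_PtHom C (kernel_point K) (kernel_point L) u g H0 (kernel_pair_map_diag H0 H1).

Lemma kernel_pairs_pullback {x y w z1 z2 z3 p : C} {hX : Hom x z1} {hY : Hom y z2}
  {hW : Hom w z3} {g1 : Hom x w} {g2 : Hom y w} {p1 : Hom p x} {p2 : Hom p y}
  (KX : KernelPair hX) (KY : KernelPair hY) (KW : KernelPair hW) (KP : KernelPair (hX ∘ p1))
  (k1 : Hom (kp_obj KX) (kp_obj KW)) (k2 : Hom (kp_obj KY) (kp_obj KW))
  (m1 : Hom (kp_obj KP) (kp_obj KX)) (m2 : Hom (kp_obj KP) (kp_obj KY)) :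
  is_pullback g1 g2 p1 p2 ->
  kp_d0 KW ∘ k1 = g1 ∘ kp_d0 KX -> kp_d1 KW ∘ k1 = g1 ∘ kp_d1 KX ->
  kp_d0 KW ∘ k2 = g2 ∘ kp_d0 KY -> kp_d1 KW ∘ k2 = g2 ∘ kp_d1 KY ->
  kp_d0 KX ∘ m1 = p1 ∘ kp_d0 KP -> kp_d1 KX ∘ m1 = p1 ∘ kp_d1 KP ->
  kp_d0 KY ∘ m2 = p2 ∘ kp_d0 KP -> kp_d1 KY ∘ m2 = p2 ∘ kp_d1 KP ->
  is_pullback k1 k2 m1 m2.
Proof.
  destruct KX as [RX x0 x1 dx HX], KY as [RY y0 y1 dy HY], KW as [RW w0 w1 dw HW],
    KP as [r d0 d1 s0 Hr]; simpl in *.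
  intros HPB Hk10 Hk11 Hk20 Hk21 Hm10 Hm11 Hm20 Hm21. split.
  - apply (pullback_hom_ext HW);
      rewrite !comp_assoc, ?Hk10, ?Hk11, ?Hk20, ?Hk21, <- !comp_assoc,
        ?Hm10, ?Hm11, ?Hm20, ?Hm21, !comp_assoc, (pullback_comm HPB); reflexivity.
  - intros q q1 q2 Hq.
    destruct (pullback_factor HPB (q1 := x0 ∘ q1) (q2 := y0 ∘ q2)) as [e0 [He01 He02]].
    { rewrite !comp_assoc, <- Hk10, <- Hk20, <- !comp_assoc, Hq. reflexivity. }
    destruct (pullback_factor HPB (q1 := x1 ∘ q1) (q2 := y1 ∘ q2)) as [e1 [He11 He12]].
    { rewrite !comp_assoc, <- Hk11, <- Hk21, <- !comp_assoc, Hq. reflexivity. }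
    destruct (pullback_factor Hr (q1 := e0) (q2 := e1)) as [u [Hu0 Hu1]].
    { rewrite <- !comp_assoc, He01, He11, !comp_assoc, (pullback_comm HX). reflexivity. }
    assert (Hm1u : m1 ∘ u = q1).
    { apply (pullback_hom_ext HX); rewrite comp_assoc, ?Hm10, ?Hm11, <- comp_assoc,
        ?Hu0, ?Hu1; assumption. }
    assert (Hm2u : m2 ∘ u = q2).
    { apply (pullback_hom_ext HY); rewrite comp_assoc, ?Hm20, ?Hm21, <- comp_assoc,
        ?Hu0, ?Hu1; assumption. }
    exists u. split; [exact Hm1u | split; [exact Hm2u |]].
    intros u' H1 H2.
    apply (pullback_hom_ext Hr); apply (pullback_hom_ext HPB);
      rewrite !comp_assoc, <- ?Hm10, <- ?Hm11, <- ?Hm20, <- ?Hm21, <- !comp_assoc,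
        ?H1, ?H2, ?Hm1u, ?Hm2u; reflexivity.
Qed.

Lemma kernel_fibre_pullback {x y z z' pa : C} {h : Hom x z} {k : Hom y z'}
  (K : KernelPair h) (L : KernelPair k) (s : Hom y x) (f : Hom x y)
  (xa : Hom pa (kp_obj K)) (fa : Hom pa y) (ua : Hom pa (kp_obj L)) (io : Hom x pa) :
  is_pullback (kp_d0 K) s xa fa ->
  kp_d0 L ∘ ua = fa -> kp_d1 L ∘ ua = f ∘ (kp_d1 K ∘ xa) ->
  kp_d1 K ∘ (xa ∘ io) = idm x -> fa ∘ io = f ->
  is_pullback ua (kp_diag L) io f.
Proof.
  intros HA Hua0 Hua1 Hio1 Hio2. split.
  - apply (pullback_hom_ext (kp_pullback L)); rewrite !comp_assoc, ?kp_d0_diag, ?kp_d1_diag,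
      comp_id_l, ?Hua0, ?Hua1, <- ?comp_assoc, ?Hio1, ?Hio2; [reflexivity | apply comp_id_r].
  - intros q q1 q2 Hq.
    assert (Hfa : fa ∘ q1 = q2).
    { rewrite <- Hua0, <- comp_assoc, Hq, comp_assoc, kp_d0_diag. apply comp_id_l. }
    assert (Hf : f ∘ (kp_d1 K ∘ (xa ∘ q1)) = q2).
    { rewrite (comp_assoc (kp_d1 K)), comp_assoc, <- Hua1, <- comp_assoc, Hq, comp_assoc,
        kp_d1_diag.
      apply comp_id_l. }
    assert (Hback : io ∘ (kp_d1 K ∘ (xa ∘ q1)) = q1).
    { apply (pullback_hom_ext HA).
      - apply (pullback_hom_ext (kp_pullback K)).
        + rewrite !comp_assoc, (pullback_comm HA), <- !comp_assoc, (comp_assoc fa io), Hio2,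
            Hf, Hfa. reflexivity.
        + rewrite !comp_assoc, <- (comp_assoc _ xa io), Hio1, comp_id_l. reflexivity.
      - rewrite comp_assoc, Hio2, Hf. exact (eq_sym Hfa). }
    exists (kp_d1 K ∘ (xa ∘ q1)). split; [exact Hback | split; [exact Hf |]].
    intros u' H1 _. rewrite <- H1, (comp_assoc xa), (comp_assoc (kp_d1 K)), Hio1,
      comp_id_l. reflexivity.
Qed.

Lemma pt_pullback_of_components {a b c p : Pt C} (f : Hom a c) (g : Hom b c)
  (p1 : Hom p a) (p2 : Hom p b) :
  is_pullback (ptu f) (ptu g) (ptu p1) (ptu p2) ->
  is_pullback (ptv f) (ptv g) (ptv p1) (ptv p2) ->
  is_pullback f g p1 p2.
Proof.
  intros Hu Hv. split.
  - apply PtHom_eq; [exact (pullback_comm Hu) | exact (pullback_comm Hv)].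
  - intros q q1 q2 Hq.
    assert (Hqu : ptu f ∘ ptu q1 = ptu g ∘ ptu q2) by exact (f_equal (@ptu C _ _) Hq).
    assert (Hqv : ptv f ∘ ptv q1 = ptv g ∘ ptv q2) by exact (f_equal (@ptv C _ _) Hq).
    destruct (pullback_factor Hu Hqu) as [u [Hu1 Hu2]].
    destruct (pullback_factor Hv Hqv) as [v [Hv1 Hv2]].
    assert (Hf : ptf p ∘ u = v ∘ ptf q).
    { apply (pullback_hom_ext Hv).
      - rewrite comp_assoc, <- (pt_eqf p1), <- comp_assoc, Hu1, (comp_assoc (ptv p1)), Hv1.
        apply pt_eqf.
      - rewrite comp_assoc, <- (pt_eqf p2), <- comp_assoc, Hu2, (comp_assoc (ptv p2)), Hv2.
        apply pt_eqf. }
    assert (Hs : u ∘ pts q = pts p ∘ v).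
    { apply (pullback_hom_ext Hu).
      - rewrite comp_assoc, Hu1, (comp_assoc (ptu p1)), (pt_eqs p1), <- comp_assoc, Hv1.
        apply pt_eqs.
      - rewrite comp_assoc, Hu2, (comp_assoc (ptu p2)), (pt_eqs p2), <- comp_assoc, Hv2.
        apply pt_eqs. }
    exists (Build_PtHom Hf Hs). split; [|split].
    + apply PtHom_eq; simpl; assumption.
    + apply PtHom_eq; simpl; assumption.
    + intros w H1 H2. apply PtHom_eq; simpl.
      * apply (pullback_hom_ext Hu); rewrite ?Hu1, ?Hu2;
          [exact (f_equal (@ptu C _ _) H1) | exact (f_equal (@ptu C _ _) H2)].
      * apply (pullback_hom_ext Hv); rewrite ?Hv1, ?Hv2;
          [exact (f_equal (@ptv C _ _) H1) | exact (f_equal (@ptv C _ _) H2)].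
Qed.

End Pullbacks.

Section SigmaSpecial.
Variables (C : Category) (Sigma : SplitClass C).
Hypothesis HP : @has_pullbacks C.
Hypothesis Hpc : point_congruous Sigma.

Lemma sigma_pt_pullback_closed {a b c p : Pt C} {f : Hom a c} {g : Hom b c}
  {p1 : Hom p a} {p2 : Hom p b} :
  is_pullback f g p1 p2 -> inSigma Sigma a -> inSigma Sigma b -> inSigma Sigma c ->
  inSigma Sigma p.
Proof. exact (proj2 (proj2 Hpc) a b c p f g p1 p2). Qed.

Lemma sigma_identity (y : C) : Sigma (idm y) (idm y).
Proof.
  apply (proj1 (proj1 Hpc)); [apply comp_id_l |].
  exists (idm y). split; apply comp_id_l.
Qed.

Lemma kernel_point_sigma {x z : C} {h : Hom x z} (K : KernelPair h) :
  sigma_special Sigma h -> inSigma Sigma (kernel_point K).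
Proof. intros Sh. exact (Sh _ _ _ _ (kp_pullback K) (kp_d0_diag K) (kp_d1_diag K)). Qed.

Lemma sigma_special_pullback {x y w p z : C} {hX : Hom x z} {hY : Hom y z} {hW : Hom w z}
  {g1 : Hom x w} {g2 : Hom y w} {p1 : Hom p x} {p2 : Hom p y} :
  sigma_special Sigma hX -> sigma_special Sigma hY -> sigma_special Sigma hW ->
  hW ∘ g1 = hX -> hW ∘ g2 = hY -> is_pullback g1 g2 p1 p2 ->
  sigma_special Sigma (hX ∘ p1).
Proof.
  intros SX SY SW Hg1 Hg2 HPB r d0 d1 s0 Hr Hd0 Hd1.
  set (KP := Build_KernelPair Hr Hd0 Hd1).
  destruct (kernel_pair_exists HP hX) as [KX].
  destruct (kernel_pair_exists HP hY) as [KY].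
  destruct (kernel_pair_exists HP hW) as [KW].
  assert (HhP : hY ∘ p2 = hX ∘ p1).
  { rewrite <- Hg1, <- Hg2, <- !comp_assoc, (pullback_comm HPB). reflexivity. }
  destruct (kernel_pair_map_exists KX KW Hg1) as [k1 [Hk10 Hk11]].
  destruct (kernel_pair_map_exists KY KW Hg2) as [k2 [Hk20 Hk21]].
  destruct (kernel_pair_map_exists KP KX (g := p1) eq_refl) as [m1 [Hm10 Hm11]].
  destruct (kernel_pair_map_exists KP KY HhP) as [m2 [Hm20 Hm21]].
  refine (sigma_pt_pullback_closed
    (f := kernel_point_hom Hk10 Hk11) (g := kernel_point_hom Hk20 Hk21)
    (p1 := kernel_point_hom Hm10 Hm11) (p2 := kernel_point_hom Hm20 Hm21) _
    (kernel_point_sigma KX SX) (kernel_point_sigma KY SY) (kernel_point_sigma KW SW)).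
  apply pt_pullback_of_components; [| exact HPB].
  exact (kernel_pairs_pullback HPB Hk10 Hk11 Hk20 Hk21 Hm10 Hm11 Hm20 Hm21).
Qed.

Lemma sigma_of_kernel_fibre {x y z z' pa : C} {h : Hom x z} {k : Hom y z'}
  {K : KernelPair h} {L : KernelPair k} {f : Hom x y} {s : Hom y x}
  {xa : Hom pa (kp_obj K)} {fa : Hom pa y} {sa : Hom y pa} {ua : Hom pa (kp_obj L)}
  {io : Hom x pa} :
  sigma_special Sigma k -> f ∘ s = idm y ->
  is_pullback (kp_d0 K) s xa fa -> xa ∘ sa = kp_diag K ∘ s -> fa ∘ sa = idm y ->
  Sigma fa sa ->
  kp_d0 L ∘ ua = fa -> kp_d1 L ∘ ua = f ∘ (kp_d1 K ∘ xa) ->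
  kp_d1 K ∘ (xa ∘ io) = idm x -> fa ∘ io = f ->
  Sigma f s.
Proof.
  intros Sk Hfs HA Hsa1 Hsa2 SA Hua0 Hua1 Hio1 Hio2.
  assert (Hua_sa : ua ∘ sa = kp_diag L ∘ idm y).
  { rewrite comp_id_r. apply (pullback_hom_ext (kp_pullback L)).
    - rewrite comp_assoc, Hua0, Hsa2, kp_d0_diag. reflexivity.
    - rewrite comp_assoc, Hua1, kp_d1_diag, <- !comp_assoc, Hsa1,
        (comp_assoc (kp_d1 K)), kp_d1_diag, comp_id_l. exact Hfs. }
  assert (Hio_s : io ∘ s = sa ∘ idm y).
  { rewrite comp_id_r. apply (pullback_hom_ext HA).
    - rewrite comp_assoc, Hsa1. apply (pullback_hom_ext (kp_pullback K)).
      + rewrite !comp_assoc, kp_d0_diag, (pullback_comm HA), <- !comp_assoc,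
          (comp_assoc fa io), Hio2, Hfs, comp_id_l. apply comp_id_r.
      + rewrite !comp_assoc, kp_d1_diag, <- (comp_assoc _ xa io), Hio1. reflexivity.
    - rewrite comp_assoc, Hio2, Hsa2. exact Hfs. }
  set (A := {| ptf := fa; pts := sa; ptfs := Hsa2 |}).
  set (I := {| ptf := idm y; pts := idm y; ptfs := comp_id_l (idm y) |}).
  set (P := {| ptf := f; pts := s; ptfs := Hfs |}).
  assert (Hsquare : is_pullback (c := kernel_point L)
    (@Build_PtHom C A (kernel_point L) ua (idm y) (eq_trans Hua0 (eq_sym (comp_id_l fa))) Hua_sa)
    (@Build_PtHom C I (kernel_point L) (kp_diag L) (idm y)
       (eq_trans (kp_d0_diag L) (eq_sym (comp_id_l _))) eq_refl)
    (@Build_PtHom C P A io (idm y) (eq_trans Hio2 (eq_sym (comp_id_l f))) Hio_s)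
    (@Build_PtHom C P I f (idm y) eq_refl (eq_trans Hfs (eq_sym (comp_id_l _))))).
  { apply pt_pullback_of_components; [| apply identity_square_pullback].
    exact (kernel_fibre_pullback HA Hua0 Hua1 Hio1 Hio2). }
  exact (sigma_pt_pullback_closed Hsquare SA (sigma_identity y) (kernel_point_sigma L Sk)).
Qed.

Lemma sigma_split_epi_of_special {x y z : C} {h : Hom x z} {k : Hom y z}
  {f : Hom x y} {s : Hom y x} :
  sigma_special Sigma h -> sigma_special Sigma k -> f ∘ s = idm y -> k ∘ f = h ->
  Sigma f s.
Proof.
  intros Sh Sk Hfs Hkf.
  assert (Hhs : h ∘ s = k) by (rewrite <- Hkf, <- comp_assoc, Hfs; apply comp_id_r).
  destruct (kernel_pair_exists HP h) as [K], (kernel_pair_exists HP k) as [L].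
  destruct (HP (kp_d0 K) s) as [pa [xa [fa HA]]].
  destruct (pullback_factor HA (q1 := kp_diag K ∘ s) (q2 := idm y)) as [sa [Hsa1 Hsa2]].
  { rewrite comp_assoc, kp_d0_diag, comp_id_l, comp_id_r. reflexivity. }
  assert (SA : Sigma fa sa).
  { exact (proj2 (proj1 Hpc) _ _ _ _ _ _ _ _ _ _ (kernel_point_sigma K Sh) HA Hsa2 Hsa1). }
  destruct (pullback_factor (kp_pullback L) (q1 := fa) (q2 := f ∘ (kp_d1 K ∘ xa)))
    as [ua [Hua0 Hua1]].
  { rewrite comp_assoc, Hkf, comp_assoc, <- (pullback_comm (kp_pullback K)), <- comp_assoc,
      (pullback_comm HA), comp_assoc, Hhs. reflexivity. }
  destruct (pullback_factor (kp_pullback K) (q1 := s ∘ f) (q2 := idm x))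
    as [rho [Hrho0 Hrho1]].
  { rewrite comp_assoc, Hhs, Hkf, comp_id_r. reflexivity. }
  destruct (pullback_factor HA (q1 := rho) (q2 := f) Hrho0) as [io [Hio1 Hio2]].
  refine (sigma_of_kernel_fibre Sk Hfs HA Hsa1 Hsa2 SA Hua0 Hua1 _ Hio2).
  rewrite Hio1. exact Hrho1.
Qed.

End SigmaSpecial.

Section Presentation.
Variables (E : Category) (Sigma : SplitClass E).

Record SpecialSlicePresentation (D : Category) (Z : E) := {
  pres_obj : D -> E;
  pres_map : forall a b : D, Hom a b -> Hom (pres_obj a) (pres_obj b);
  pres_str : forall a : D, Hom (pres_obj a) Z;
  pres_map_comp : forall (a b c : D) (g : Hom b c) (f : Hom a b),
    pres_map (g ∘ f) = pres_map g ∘ pres_map f;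
  pres_map_id : forall a : D, pres_map (idm a) = idm (pres_obj a);
  pres_map_faithful : forall (a b : D) (f g : Hom a b), pres_map f = pres_map g -> f = g;
  pres_str_natural : forall (a b : D) (g : Hom a b), pres_str b ∘ pres_map g = pres_str a;
  pres_str_special : forall a : D, sigma_special Sigma (pres_str a);
  pres_full : forall (a b : D) (g : Hom (pres_obj a) (pres_obj b)),
    pres_str b ∘ g = pres_str a -> exists g' : Hom a b, pres_map g' = g;
  pres_ess_surj : forall (x : E) (h : Hom x Z), sigma_special Sigma h ->
    exists (a : D) (i : Hom x (pres_obj a)) (j : Hom (pres_obj a) x),
      j ∘ i = idm x /\ i ∘ j = idm (pres_obj a) /\ pres_str a ∘ i = h }.
Arguments pres_map_faithful [D Z] s [a b f g] _.
Arguments pres_full [D Z] s [a b g] _.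
Arguments pres_str_special [D Z] s a.

Variables (D : Category) (Z : E) (F : SpecialSlicePresentation D Z).
Hypothesis HP : @has_pullbacks E.
Hypothesis Hpc : point_congruous Sigma.

Local Notation U := (pres_obj F).
Local Notation map := (pres_map F).

Lemma pres_reflects_pullback {a b c p : D} {f : Hom a c} {g : Hom b c}
  {p1 : Hom p a} {p2 : Hom p b} :
  is_pullback (map f) (map g) (map p1) (map p2) -> is_pullback f g p1 p2.
Proof.
  intros H. split.
  - apply (pres_map_faithful F). rewrite !(pres_map_comp F). exact (pullback_comm H).
  - intros q q1 q2 Hq.
    assert (Hq' : map f ∘ map q1 = map g ∘ map q2)
      by (rewrite <- !(pres_map_comp F), Hq; reflexivity).
    destruct (pullback_factor H Hq') as [u [Hu1 Hu2]].
    assert (Hu : pres_str F p ∘ u = pres_str F q).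
    { rewrite <- (pres_str_natural F p1), <- comp_assoc, Hu1. apply (pres_str_natural F). }
    destruct (pres_full F Hu) as [u' Hu'].
    exists u'. split; [|split].
    + apply (pres_map_faithful F). rewrite (pres_map_comp F), Hu'. exact Hu1.
    + apply (pres_map_faithful F). rewrite (pres_map_comp F), Hu'. exact Hu2.
    + intros v H1 H2. apply (pres_map_faithful F). rewrite Hu'.
      apply (pullback_hom_ext H); rewrite <- (pres_map_comp F);
        [rewrite H1, Hu1 | rewrite H2, Hu2]; reflexivity.
Qed.

Lemma pres_pullback_exists {a b c : D} (f : Hom a c) (g : Hom b c) :
  exists (p : D) (p1 : Hom p a) (p2 : Hom p b),
    is_pullback (map f) (map g) (map p1) (map p2).
Proof.
  destruct (HP (map f) (map g)) as [P [px [pg HE]]].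
  assert (SP : sigma_special Sigma (pres_str F a ∘ px)).
  { exact (sigma_special_pullback HP Hpc (pres_str_special F a) (pres_str_special F b)
      (pres_str_special F c) (pres_str_natural F f) (pres_str_natural F g) HE). }
  destruct (pres_ess_surj F SP) as [p [i [j [Hji [Hij Hi]]]]].
  assert (Hstr : pres_str F p = pres_str F a ∘ (px ∘ j)).
  { rewrite comp_assoc, <- Hi, <- comp_assoc, Hij, comp_id_r. reflexivity. }
  destruct (pres_full F (g := px ∘ j) (eq_sym Hstr)) as [p1 Hp1].
  destruct (pres_full F (a := p) (b := b) (g := pg ∘ j)) as [p2 Hp2].
  { rewrite Hstr, <- (pres_str_natural F g), <- (pres_str_natural F f), <- !comp_assoc,
      (comp_assoc (map g)), <- (pullback_comm HE), <- comp_assoc. reflexivity. }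
  exists p, p1, p2. rewrite Hp1, Hp2. exact (pullback_precomp_iso HE Hji Hij).
Qed.

Lemma pres_preserves_pullback {a b c p : D} {f : Hom a c} {g : Hom b c}
  {p1 : Hom p a} {p2 : Hom p b} :
  is_pullback f g p1 p2 -> is_pullback (map f) (map g) (map p1) (map p2).
Proof.
  intros Hp. destruct (pres_pullback_exists f g) as [q [q1 [q2 HE]]].
  destruct (pullback_unique_iso (pres_reflects_pullback HE) Hp) as [j [i [Hji [Hij [Hj1 Hj2]]]]].
  rewrite <- Hj1, <- Hj2, !(pres_map_comp F).
  apply (pullback_precomp_iso (i := map i) HE); rewrite <- (pres_map_comp F), ?Hji, ?Hij;
    apply (pres_map_id F).
Qed.

Lemma pres_map_mono {m x : D} (i : Hom m x) : is_mono i -> is_mono (map i).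
Proof.
  intros Hm t u v Huv. destruct (pres_pullback_exists i i) as [k [e0 [e1 HE]]].
  assert (He : e0 = e1).
  { apply Hm, (pres_map_faithful F). rewrite !(pres_map_comp F). exact (pullback_comm HE). }
  destruct (pullback_factor HE Huv) as [w [Hw0 Hw1]].
  rewrite <- Hw0, <- Hw1, He. reflexivity.
Qed.

Lemma pres_reflects_iso {m x : D} (i : Hom m x) : is_iso (map i) -> is_iso i.
Proof.
  intros [g [Hgi Hig]].
  assert (Hg : pres_str F m ∘ g = pres_str F x).
  { rewrite <- (pres_str_natural F i), <- comp_assoc, Hig. apply comp_id_r. }
  destruct (pres_full F Hg) as [g' Hg'].
  exists g'. split; apply (pres_map_faithful F); rewrite (pres_map_comp F), (pres_map_id F), Hg';
    assumption.
Qed.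

Lemma pres_reflects_jointly_extremally_epic {a b w : D} (u : Hom a w) (v : Hom b w) :
  jointly_extremally_epic (map u) (map v) -> jointly_extremally_epic u v.
Proof.
  intros JE m i u' v' Hm Hu Hv. apply pres_reflects_iso.
  apply (JE _ _ (map u') (map v') (pres_map_mono Hm));
    rewrite <- (pres_map_comp F); [rewrite Hu | rewrite Hv]; reflexivity.
Qed.

Theorem presentation_protomodular : sigma_protomodular Sigma -> protomodular D.
Proof.
  intros Hpm. split.
  - intros x y f s yb yy _. destruct (pres_pullback_exists f yy) as [p [xx [fb H]]].
    exists p, xx, fb. exact (pres_reflects_pullback H).
  - intros x y f s Hfs yb yy p xx fb Hpb.
    apply pres_reflects_jointly_extremally_epic.
    assert (Hfs' : map f ∘ map s = idm (U y)).
    { rewrite <- (pres_map_comp F), Hfs. apply (pres_map_id F). }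
    refine (Hpm _ _ _ _ _ _ _ _ _ _ (pres_preserves_pullback Hpb)).
    exact (sigma_split_epi_of_special HP Hpc (pres_str_special F x) (pres_str_special F y)
      Hfs' (pres_str_natural F f)).
Qed.

End Presentation.

Definition slice_presentation (E : Category) (Sigma : SplitClass E) (Z : E) :
  SpecialSlicePresentation Sigma (SigmaSpecialSlice Sigma Z) Z.
Proof.
  unshelve refine (@Build_SpecialSlicePresentation E Sigma (SigmaSpecialSlice Sigma Z) Z
    (fun a => projT1 (proj1_sig a)) (fun a b g => proj1_sig g)
    (fun a => projT2 (proj1_sig a)) _ _ _ _ _ _ _).
  - reflexivity.
  - reflexivity.
  - intros a b f g H. exact (SHom_eq H).
  - intros a b g. exact (proj2_sig g).
  - intros a. exact (proj2_sig a).
  - intros a b g H. exists (exist _ g H). reflexivity.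
  - intros x h Hs. exists (exist _ (existT _ x h) Hs), (idm x), (idm x).
    simpl. rewrite comp_id_l. auto using comp_id_r.
Defined.

Definition terminal_map {C : Category} {t : C} (Ht : is_terminal t) (x : C) : Hom x t :=
  proj1_sig (constructive_indefinite_description _ (Ht x)).

Definition special_objects_presentation (E : Category) (Sigma : SplitClass E) (t : E)
  (Ht : is_terminal t) :
  SpecialSlicePresentation Sigma (SigmaSpecialObjects Sigma) t.
Proof.
  unshelve refine (@Build_SpecialSlicePresentation E Sigma (SigmaSpecialObjects Sigma) t
    (fun a => proj1_sig a) (fun a b g => g) (fun a => terminal_map Ht (proj1_sig a))
    _ _ _ _ _ _ _).
  - reflexivity.
  - reflexivity.
  - intros a b f g H. exact H.
  - intros a b g. apply (terminal_hom_unique Ht).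
  - intros a. exact (proj2_sig a t Ht _).
  - intros a b g _. exists g. reflexivity.
  - intros x h Hs.
    assert (Ho : sigma_special_object Sigma x).
    { intros t' Ht' f' r d0 d1 s0 Hr.
      exact (Hs r d0 d1 s0 (pullback_over_terminal h h Ht Ht' Hr)). }
    exists (exist _ x Ho), (idm x), (idm x).
    split; [apply comp_id_l | split; [apply comp_id_l | apply (terminal_hom_unique Ht)]].
Defined.

Theorem proposition8p6 (E : Category) (Sigma : SplitClass E) :
  finitely_complete E ->
  split_epi_class Sigma ->
  point_congruous Sigma ->
  sigma_protomodular Sigma ->
  (forall Z : E, protomodular (SigmaSpecialSlice Sigma Z)) /\
  protomodular (SigmaSpecialObjects Sigma).
Proof.
  intros [[t Ht] HP] _ Hpc Hpm. split.
  - intros Z. exact (presentation_protomodular (slice_presentation Sigma Z) HP Hpc Hpm).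
  - exact (presentation_protomodular (special_objects_presentation Sigma Ht) HP Hpc Hpm).
Qed.
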